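(* Let $X$ be a reflexive Banach space, $S\subseteq\partial B_1(0)$ a nonempty set, $\varphi:X\to\mathbb{R}$ locally Lipschitz continuous, and $\mu<\inf_S\varphi$ a real number. Suppose that (a) $\lim_{t\to\infty}\varphi(tu)=-\infty$ for all $u\in S$, and (b) $\langle v^*,v\rangle<0$ for all $v\in\varphi^{-1}(\mu)$ and all $v^*\in\partial\varphi(v)$. Then there exists a continuous mapping $\tau:S\to(1,\infty)$ such that for all $u\in S$ and all $t\ge1$: $\varphi(tu)>\mu$ if $t<\tau(u)$, $\varphi(tu)=\mu$ if $t=\tau(u)$, and $\varphi(tu)<\mu$ if $t>\tau(u)$.
   Context: $B_1(0)$ is the open unit ball of $X$ and $\partial B_1(0)$ the unit sphere; $\langle\cdot,\cdot\rangle$ is the duality pairing between $X^*$ and $X$. For a locally Lipschitz $\varphi:X\to\mathbb{R}$, the Clarke generalized directional derivative is $\varphi^\circ(u;v)=\limsup_{w\to u,\,t\to0^+}\frac{\varphi(w+tv)-\varphi(w)}{t}$ and the Clarke generalized subdifferential is $\partial\varphi(u)=\{u^*\in X^*:\langle u^*,v\rangle\le\varphi^\circ(u;v)\ \forall v\in X\}$. *)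

From Stdlib Require Import Reals.
Open Scope R_scope.

Record NormedSpace := {
  NS_carrier :> Type;
  nzero : NS_carrier;
  nadd : NS_carrier -> NS_carrier -> NS_carrier;
  nopp : NS_carrier -> NS_carrier;
  nscal : R -> NS_carrier -> NS_carrier;
  nnorm : NS_carrier -> R;
  nadd_assoc : forall x y z, nadd x (nadd y z) = nadd (nadd x y) z;
  nadd_comm : forall x y, nadd x y = nadd y x;
  nadd_0 : forall x, nadd x nzero = x;
  nadd_opp : forall x, nadd x (nopp x) = nzero;
  nscal_1 : forall x, nscal 1 x = x;
  nscal_assoc : forall a b x, nscal a (nscal b x) = nscal (a * b) x;
  nscal_distr_v : forall a x y, nscal a (nadd x y) = nadd (nscal a x) (nscal a y);
  nscal_distr_s : forall a b x, nscal (a + b) x = nadd (nscal a x) (nscal b x);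
  nnorm_eq0 : forall x, nnorm x = 0 -> x = nzero;
  nnorm_scal : forall a x, nnorm (nscal a x) = Rabs a * nnorm x;
  nnorm_triangle : forall x y, nnorm (nadd x y) <= nnorm x + nnorm y
}.

Arguments nzero {_}.
Arguments nadd {_} _ _.
Arguments nopp {_} _.
Arguments nscal {_} _ _.
Arguments nnorm {_} _.

Definition nsub {X : NormedSpace} (x y : X) : X := nadd x (nopp y).

Definition complete (X : NormedSpace) : Prop :=
  forall u : nat -> X,
    (forall eps, 0 < eps -> exists N, forall m n, (N <= m)%nat -> (N <= n)%nat ->
        nnorm (nsub (u m) (u n)) < eps) ->
    exists l : X, forall eps, 0 < eps -> exists N, forall n, (N <= n)%nat ->
        nnorm (nsub (u n) l) < eps.

(** Elements of the dual X^* : continuous (= bounded) linear functionals.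
    The duality pairing <f, x> is application f x. *)
Definition is_linear_functional {X : NormedSpace} (f : X -> R) : Prop :=
  (forall x y, f (nadd x y) = f x + f y) /\ (forall a x, f (nscal a x) = a * f x).

Definition in_dual {X : NormedSpace} (f : X -> R) : Prop :=
  is_linear_functional f /\ exists C, forall x, Rabs (f x) <= C * nnorm x.

(** Reflexivity: the canonical embedding X -> X^** is surjective, i.e. every
    bounded linear functional Phi on X^* (bounded w.r.t. the dual norm
    ||f||_* = inf { M >= 0 | forall x, |f x| <= M ||x|| }) is evaluation at some x. *)
Definition reflexive (X : NormedSpace) : Prop :=
  forall Phi : (X -> R) -> R,
    (forall f g, in_dual f -> in_dual g -> Phi (fun x => f x + g x) = Phi f + Phi g) ->
    (forall a f, in_dual f -> Phi (fun x => a * f x) = a * Phi f) ->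
    (exists C, forall f M, in_dual f -> 0 <= M ->
        (forall x, Rabs (f x) <= M * nnorm x) -> Rabs (Phi f) <= C * M) ->
    exists x0 : X, forall f, in_dual f -> Phi f = f x0.

Definition banach (X : NormedSpace) : Prop := complete X.

Definition locally_lipschitz {X : NormedSpace} (phi : X -> R) : Prop :=
  forall u, exists r L, 0 < r /\ forall x y, nnorm (nsub x u) < r -> nnorm (nsub y u) < r ->
    Rabs (phi x - phi y) <= L * nnorm (nsub x y).

(** [is_clarke_dd phi u v L] : L is the (finite) Clarke generalized directional
    derivative  limsup_{w -> u, t -> 0+} (phi (w + t v) - phi w) / t. *)
Definition is_clarke_dd {X : NormedSpace} (phi : X -> R) (u v : X) (L : R) : Prop :=
  (forall eps, 0 < eps -> exists delta, 0 < delta /\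
     forall w t, nnorm (nsub w u) < delta -> 0 < t < delta ->
       (phi (nadd w (nscal t v)) - phi w) / t <= L + eps) /\
  (forall eps delta, 0 < eps -> 0 < delta -> exists w t,
       nnorm (nsub w u) < delta /\ 0 < t < delta /\
       L - eps < (phi (nadd w (nscal t v)) - phi w) / t).

Definition clarke_subdiff {X : NormedSpace} (phi : X -> R) (u : X) (us : X -> R) : Prop :=
  in_dual us /\ forall v L, is_clarke_dd phi u v L -> us v <= L.

(** Fix [u] in [S] and study the real function [g t = phi (t u)] for [t >= 1].
   Since [g 1 > mu] and [g t -> -oo], [g] hits the level [mu]; the first
   hitting time is [tau u].  The key point is that every crossing of the
   level is strict and downward: at a point [v = t u] with [phi v = mu] the
   Clarke derivative [phi°(v; v)] is negative.  Indeed [phi°(v; .)] is a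
   finite sublinear functional bounded by a local Lipschitz constant, so by
   the Hahn-Banach theorem some [f <= phi°(v; .)] with [f v = phi°(v; v)]
   exists; [f] is a Clarke subgradient, and hypothesis (b) gives [f v < 0].
   Strict downward crossings forbid [g] from coming back up to [mu], which
   yields the sign pattern around [tau u]; continuity of [tau] then follows
   from continuity of [phi] at the points [(tau u +- e) u]. *)

From Stdlib Require Import Reals Lra ClassicalEpsilon Classical.
From mathcomp Require classical_sets.
Open Scope R_scope.

Lemma Rabs_minus_one : Rabs (-1) = 1.
Proof. unfold Rabs; destruct Rcase_abs; lra. Qed.

Section VectorAlgebra.
Variable X : NormedSpace.
Implicit Types x y z w : X.

Lemma nadd_0l x : nadd nzero x = x.
Proof. rewrite nadd_comm; apply nadd_0. Qed.

Lemma nadd_cancel z x y : nadd z x = nadd z y -> x = y.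
Proof.
intros H. rewrite <- (nadd_0l x), <- (nadd_0l y).
rewrite <- (nadd_opp _ z), (nadd_comm _ z (nopp z)), <- !nadd_assoc, H.
reflexivity.
Qed.

Lemma nscal_0 x : nscal 0 x = nzero.
Proof.
apply (nadd_cancel (nscal 0 x)).
rewrite nadd_0, <- nscal_distr_s, Rplus_0_l. reflexivity.
Qed.

Lemma nscal_zero a : nscal a (@nzero X) = nzero.
Proof. rewrite <- (nscal_0 nzero), nscal_assoc, Rmult_0_r. reflexivity. Qed.

Lemma nopp_scal x : nopp x = nscal (-1) x.
Proof.
apply (nadd_cancel x). rewrite nadd_opp. rewrite <- (nscal_1 _ x) at 1.
rewrite <- nscal_distr_s. replace (1 + -1) with 0 by ring.
rewrite nscal_0. reflexivity.
Qed.

Lemma nnorm_zero : nnorm (@nzero X) = 0.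
Proof. rewrite <- (nscal_0 nzero), nnorm_scal, Rabs_R0. ring. Qed.

Lemma nnorm_ge0 x : 0 <= nnorm x.
Proof.
pose proof (nnorm_triangle _ x (nopp x)) as H.
rewrite nadd_opp, nnorm_zero, nopp_scal, nnorm_scal, Rabs_minus_one in H.
lra.
Qed.

Lemma nsub_xx x : nsub x x = nzero.
Proof. apply nadd_opp. Qed.

Lemma nsub_scal a b x : nsub (nscal a x) (nscal b x) = nscal (a - b) x.
Proof.
unfold nsub. rewrite nopp_scal, nscal_assoc, <- nscal_distr_s. f_equal; ring.
Qed.

Lemma nsub_scal_r t x y : nsub (nscal t x) (nscal t y) = nscal t (nsub x y).
Proof.
unfold nsub. rewrite !nopp_scal, !nscal_assoc, nscal_distr_v, nscal_assoc.
f_equal; f_equal; ring.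
Qed.

Lemma nsub_addl w e : nsub (nadd w e) w = e.
Proof.
unfold nsub.
rewrite (nadd_comm _ w e), <- nadd_assoc, nadd_opp, nadd_0. reflexivity.
Qed.

Lemma nsub_add_r w e z : nsub (nadd w e) z = nadd (nsub w z) e.
Proof. unfold nsub. rewrite <- !nadd_assoc. f_equal. apply nadd_comm. Qed.

Lemma nadd_scal_scal t h x :
  nadd (nscal t x) (nscal h (nscal t x)) = nscal (t + h * t) x.
Proof. rewrite nscal_assoc, <- nscal_distr_s. reflexivity. Qed.

Lemma nadd_shuffle x y z : nadd (nadd x y) (nadd z (nopp x)) = nadd z y.
Proof.
rewrite (nadd_comm _ x y), <- (nadd_assoc _ y x), (nadd_comm _ z (nopp x)),
  (nadd_assoc _ x (nopp x) z), nadd_opp, nadd_0l.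
apply nadd_comm.
Qed.

End VectorAlgebra.

(** ** The Hahn-Banach extension theorem

   A partial linear functional is represented by its graph [G : X * R -> Prop].  One-dimensional extensions and
   Zorn's lemma give a dominated graph defined everywhere. *)

Section HahnBanach.
Variable X : NormedSpace.
Variable p : X -> R.
Hypothesis p_subadd : forall x y, p (nadd x y) <= p x + p y.
Hypothesis p_poshom : forall a x, 0 < a -> p (nscal a x) = a * p x.

Lemma p_zero : p nzero = 0.
Proof. pose proof (p_poshom 2 nzero) as H. rewrite nscal_zero in H. lra. Qed.

Definition dominated_graph (G : X * R -> Prop) : Prop :=
  (forall x a b, G (x, a) -> G (x, b) -> a = b) /\
  (forall x a y b, G (x, a) -> G (y, b) -> G (nadd x y, a + b)) /\
  (forall x a l, G (x, a) -> G (nscal l x, l * a)) /\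
  (forall x a, G (x, a) -> a <= p x).

Definition graph_extend (G : X * R -> Prop) (y : X) (c : R) : X * R -> Prop :=
  fun zb => exists x a l, G (x, a) /\ fst zb = nadd x (nscal l y) /\
    snd zb = a + l * c.

Lemma graph_extend_incl G y c t : G t -> graph_extend G y c t.
Proof.
destruct t as [x a]. intros H. exists x, a, 0. split; [exact H|]. simpl.
rewrite nscal_0, nadd_0. split; [reflexivity|ring].
Qed.

Lemma graph_extend_new G y c : dominated_graph G -> G (nzero, 0) ->
  graph_extend G y c (y, c).
Proof.
intros _ H0. exists nzero, 0, 1. split; [exact H0|]. simpl.
rewrite nadd_0l, nscal_1. split; [reflexivity|ring].
Qed.

(** The extension stays below [p] when [c] is squeezed between the two
    bounds forced by sublinearity of [p]: scale the point [x + l y] by [1/|l|]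
    and use the bound matching the sign of [l]. *)
Lemma graph_extend_below G y c : dominated_graph G ->
  (forall x a, G (x, a) -> a - p (nsub x y) <= c) ->
  (forall x a, G (x, a) -> c <= p (nadd x y) - a) ->
  forall x1 a1 l1, G (x1, a1) -> a1 + l1 * c <= p (nadd x1 (nscal l1 y)).
Proof.
intros [_ [_ [Gs Gd]]] Hlo Hup x1 a1 l1 H1.
destruct (Rtotal_order l1 0) as [Hl|[Hl|Hl]].
- set (m := - l1). assert (Hm : 0 < m) by (unfold m; lra).
  pose proof (Hlo _ _ (Gs _ _ (/ m) H1)) as Hc.
  assert (E : nscal m (nsub (nscal (/ m) x1) y) = nadd x1 (nscal l1 y)).
  { unfold nsub. rewrite nscal_distr_v, nscal_assoc, nopp_scal, nscal_assoc.
    replace (m * / m) with 1 by (field; lra). rewrite nscal_1.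
    f_equal. f_equal. unfold m; ring. }
  rewrite <- E, p_poshom by exact Hm.
  apply Rmult_le_compat_l with (r := m) in Hc; [|lra].
  replace (a1 + l1 * c) with (m * (/ m * a1) - m * c); [lra|].
  unfold m. field. lra.
- subst. rewrite nscal_0, nadd_0. replace (a1 + 0 * c) with a1 by ring.
  apply Gd; exact H1.
- pose proof (Hup _ _ (Gs _ _ (/ l1) H1)) as Hc.
  assert (E : nscal l1 (nadd (nscal (/ l1) x1) y) = nadd x1 (nscal l1 y)).
  { rewrite nscal_distr_v, nscal_assoc.
    replace (l1 * / l1) with 1 by (field; lra). rewrite nscal_1. reflexivity. }
  rewrite <- E, p_poshom by exact Hl.
  apply Rmult_le_compat_l with (r := l1) in Hc; [|lra].
  replace (a1 + l1 * c) with (l1 * c + l1 * (/ l1 * a1)); [lra|]. field. lra.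
Qed.

Lemma graph_extend_dominated G y c : dominated_graph G -> (~ exists a, G (y, a)) ->
  (forall x a, G (x, a) -> a - p (nsub x y) <= c) ->
  (forall x a, G (x, a) -> c <= p (nadd x y) - a) ->
  dominated_graph (graph_extend G y c).
Proof.
intros HG Hy Hlo Hup. pose proof HG as [Gf [Ga [Gs Gd]]].
split; [|split; [|split]].
- intros z b1 b2 [x1 [a1 [l1 [H1 [E1 F1]]]]] [x2 [a2 [l2 [H2 [E2 F2]]]]].
  simpl in *. subst.
  destruct (Req_dec l1 l2) as [El|Nl].
  + subst l2. rewrite (nadd_comm _ x1), (nadd_comm _ x2) in E2.
    apply nadd_cancel in E2. subst x2. rewrite (Gf _ _ _ H1 H2). reflexivity.
  + (* otherwise [y] would already lie in the domain of [G] *)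
    exfalso. apply Hy. exists (/ (l1 - l2) * (a2 + -1 * a1)).
    assert (Hv : nscal (l1 - l2) y = nadd x2 (nscal (-1) x1)).
    { apply (nadd_cancel _ (nadd x1 (nscal l2 y))).
      rewrite <- nadd_assoc, <- nscal_distr_s.
      replace (l2 + (l1 - l2)) with l1 by ring.
      rewrite E2, <- nopp_scal, nadd_shuffle. reflexivity. }
    replace y with (nscal (/ (l1 - l2)) (nadd x2 (nscal (-1) x1))).
    2:{ rewrite <- Hv, nscal_assoc.
        replace (/ (l1 - l2) * (l1 - l2)) with 1 by (field; lra). apply nscal_1. }
    apply Gs, Ga; [exact H2|]. apply Gs. exact H1.
- intros z1 b1 z2 b2 [x1 [a1 [l1 [H1 [E1 F1]]]]] [x2 [a2 [l2 [H2 [E2 F2]]]]].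
  simpl in *. subst. exists (nadd x1 x2), (a1 + a2), (l1 + l2).
  split; [apply Ga; assumption|]. simpl. split; [|ring].
  rewrite nscal_distr_s, <- !nadd_assoc. f_equal. rewrite !nadd_assoc. f_equal.
  apply nadd_comm.
- intros z b m [x1 [a1 [l1 [H1 [E1 F1]]]]]. simpl in *. subst.
  exists (nscal m x1), (m * a1), (m * l1). split; [apply Gs; assumption|]. simpl.
  rewrite nscal_distr_v, nscal_assoc. split; [reflexivity|ring].
- intros z b [x1 [a1 [l1 [H1 [E1 F1]]]]]. simpl in *. subst.
  exact (graph_extend_below G y c HG Hlo Hup x1 a1 l1 H1).
Qed.

(** A constant [c] admissible for [graph_extend_dominated] always exists:
    every lower bound is below every upper bound by subadditivity. *)
Lemma extension_constant_exists G y : dominated_graph G -> G (nzero, 0) ->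
  exists c, (forall x a, G (x, a) -> a - p (nsub x y) <= c) /\
            (forall x a, G (x, a) -> c <= p (nadd x y) - a).
Proof.
intros [Gf [Ga [Gs Gd]]] H0.
set (E := fun r => exists x a, G (x, a) /\ r = a - p (nsub x y)).
assert (key : forall x a x' a', G (x, a) -> G (x', a') ->
          a - p (nsub x y) <= p (nadd x' y) - a').
{ intros x a x' a' H1 H2. pose proof (Gd _ _ (Ga _ _ _ _ H1 H2)) as Hd.
  assert (Ex : nadd x x' = nadd (nsub x y) (nadd x' y)).
  { unfold nsub. rewrite <- nadd_assoc. f_equal.
    rewrite nadd_assoc, (nadd_comm _ (nopp y)), <- nadd_assoc,
      (nadd_comm _ (nopp y)), nadd_opp, nadd_0.
    reflexivity. }
  rewrite Ex in Hd. pose proof (p_subadd (nsub x y) (nadd x' y)). lra. }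
destruct (completeness E) as [c [Hc1 Hc2]].
- exists (p (nadd nzero y) - 0). intros r [x [a [H ->]]]. apply key; assumption.
- exists (0 - p (nsub nzero y)), nzero, 0. split; auto.
- exists c. split.
  + intros x a H. apply Hc1. exists x, a. auto.
  + intros x a H. apply Hc2. intros r [x' [a' [H' ->]]]. apply key; assumption.
Qed.

Lemma maximal_dominated_graph_total A : dominated_graph A -> A (nzero, 0) ->
  (forall B, (forall t, A t -> B t) -> dominated_graph B -> forall t, B t -> A t) ->
  forall y, exists a, A (y, a).
Proof.
intros HA A0 Amax y. apply NNPP. intros Hy.
destruct (extension_constant_exists A y HA A0) as [c [Hc1 Hc2]].
apply Hy. exists c. apply (Amax (graph_extend A y c)).
- apply graph_extend_incl.
- apply graph_extend_dominated; assumption.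
- apply graph_extend_new; assumption.
Qed.

Lemma chain_union_dominated (F : (X * R -> Prop) -> Prop) :
  (forall G t, F G -> G t -> dominated_graph G) ->
  (forall A B, F A -> F B -> (forall t, A t -> B t) \/ (forall t, B t -> A t)) ->
  dominated_graph (fun t => exists2 G, F G & G t).
Proof.
intros HF Htot. split; [|split; [|split]].
- intros x a b [G1 F1 H1] [G2 F2 H2].
  destruct (Htot G1 G2 F1 F2) as [S12|S21].
  + destruct (HF G2 _ F2 H2) as [Gf _]. apply (Gf x); auto.
  + destruct (HF G1 _ F1 H1) as [Gf _]. apply (Gf x); auto.
- intros x a y b [G1 F1 H1] [G2 F2 H2].
  destruct (Htot G1 G2 F1 F2) as [S12|S21].
  + destruct (HF G2 _ F2 H2) as [_ [Ga _]]. exists G2; auto.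
  + destruct (HF G1 _ F1 H1) as [_ [Ga _]]. exists G1; auto.
- intros x a l [G1 F1 H1]. destruct (HF G1 _ F1 H1) as [_ [_ [Gs _]]].
  exists G1; auto.
- intros x a [G1 F1 H1]. destruct (HF G1 _ F1 H1) as [_ [_ [_ Gd]]]. eauto.
Qed.

Theorem hahn_banach_extension G0 : dominated_graph G0 -> G0 (nzero, 0) ->
  exists f : X -> R, is_linear_functional f /\ (forall x, f x <= p x) /\
    (forall x a, G0 (x, a) -> f x = a).
Proof.
intros HG0 G00.
(* Zorn's lemma on the dominated graphs containing [G0]; the empty graph is
   admitted too, being the union of the empty chain. *)
set (P := fun G => (forall t, ~ G t) \/
                   (dominated_graph G /\ forall t, G0 t -> G t)).
destruct (@classical_sets.Zorn_bigcup _ P) as [A [PA Amax]].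
- intros F HF Htot.
  destruct (classic (exists t G, F G /\ G t)) as [[t0 [G1 [FG1 Gt0]]]|Hno].
  + assert (HFG : forall G t, F G -> G t ->
                  dominated_graph G /\ forall t, G0 t -> G t).
    { intros G t FG Gt. destruct (HF G FG) as [Hn|Hg]; [|exact Hg].
      exfalso; exact (Hn t Gt). }
    right. split.
    * apply chain_union_dominated; [|exact Htot].
      intros G t FG Gt. apply (HFG G t FG Gt).
    * intros t Ht. exists G1; [exact FG1|]. apply (HFG G1 t0 FG1 Gt0). exact Ht.
  + left. intros t [G FG Gt]. apply Hno. exists t, G. auto.
- destruct PA as [Hemp|[HA HA0]].
  { exfalso. apply (Amax G0); [split|right; split; auto].
    - intros t Ht. exfalso; exact (Hemp t Ht).
    - intros H. exact (Hemp _ (H _ G00)). }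
  assert (A0 : A (nzero, 0)) by (apply HA0; exact G00).
  assert (Htot : forall y, exists a, A (y, a)).
  { apply maximal_dominated_graph_total; [exact HA|exact A0|].
    intros B AB HB t Bt. apply NNPP. intros Hn. apply (Amax B).
    - split; [exact AB|]. intros H. exact (Hn (H t Bt)).
    - right. split; [exact HB|]. intros t' Ht'. apply AB, HA0, Ht'. }
  set (f := fun x => epsilon (inhabits 0) (fun a => A (x, a))).
  assert (Hf : forall x, A (x, f x)).
  { intros x. unfold f. apply epsilon_spec. apply Htot. }
  destruct HA as [Gf [Ga [Gs Gd]]].
  exists f. split; [split|split].
  + intros x y. apply (Gf (nadd x y)); [apply Hf|]. apply Ga; apply Hf.
  + intros a x. apply (Gf (nscal a x)); [apply Hf|]. apply Gs; apply Hf.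
  + intros x. apply Gd, Hf.
  + intros x a H. apply (Gf x); [apply Hf|]. apply HA0, H.
Qed.

Corollary hahn_banach_at v : v <> nzero ->
  exists f : X -> R, is_linear_functional f /\ (forall x, f x <= p x) /\ f v = p v.
Proof.
intros Hv.
set (Gzero := fun t : X * R => t = (nzero, 0)).
assert (HGzero : dominated_graph Gzero).
{ unfold Gzero; split; [|split; [|split]].
  - intros x a b Ha Hb. inversion Ha; inversion Hb; subst. reflexivity.
  - intros x a y b Ha Hb. inversion Ha; inversion Hb; subst.
    rewrite nadd_0, Rplus_0_r. reflexivity.
  - intros x a l Ha. inversion Ha; subst. rewrite nscal_zero, Rmult_0_r. reflexivity.
  - intros x a Ha. inversion Ha; subst. rewrite p_zero. lra. }
assert (HG1 : dominated_graph (graph_extend Gzero v (p v))).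
{ apply graph_extend_dominated; [exact HGzero| | |]; unfold Gzero.
  - intros [a Ha]. inversion Ha. auto.
  - (* [0 = p (v + (0 - v)) <= p v + p (0 - v)] *)
    intros x a Ha. inversion Ha; subst.
    pose proof (p_subadd v (nsub nzero v)) as H.
    unfold nsub in *. rewrite nadd_0l, nadd_opp, p_zero in *. lra.
  - intros x a Ha. inversion Ha; subst. rewrite nadd_0l. lra. }
destruct (hahn_banach_extension _ HG1) as [f [Lf [Hfp Hfv]]].
- apply graph_extend_incl. reflexivity.
- exists f. split; [exact Lf|split; [exact Hfp|]]. apply Hfv.
  apply graph_extend_new; [exact HGzero|reflexivity].
Qed.

End HahnBanach.

Lemma lub_approx (E : R -> Prop) l eps : is_lub E l -> 0 < eps ->
  exists x, E x /\ l - eps < x.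
Proof.
intros [H1 H2] He. apply NNPP. intros Hn.
assert (l <= l - eps); [|lra]. apply H2. intros x Ex.
destruct (Rle_lt_dec x (l - eps)); auto. exfalso; apply Hn; exists x; auto.
Qed.

(** Limit superior at [0+] of a family of sets of reals [Q de], increasing in
    the radius [de] and bounded for small radii: [L = inf_de sup (Q de)]
    satisfies the two estimates defining a finite [limsup]. *)
Lemma limsup_exists (Q : R -> R -> Prop) (d0 B : R) :
  0 < d0 ->
  (forall de, 0 < de -> exists q, Q de q) ->
  (forall de1 de2 q, de1 <= de2 -> Q de1 q -> Q de2 q) ->
  (forall de q, de <= d0 -> Q de q -> Rabs q <= B) ->
  exists L,
    (forall eps, 0 < eps -> exists de, 0 < de /\ forall q, Q de q -> q <= L + eps) /\
    (forall eps de, 0 < eps -> 0 < de -> exists q, Q de q /\ L - eps < q).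
Proof.
intros Hd0 Qne Qmono Qbound.
set (E := fun y => forall de, 0 < de -> exists q, Q de q /\ y <= q).
destruct (completeness E) as [L HL].
- exists B. intros y Ey. destruct (Ey d0 Hd0) as [q [Qq Hq]].
  pose proof (Qbound d0 q (Rle_refl _) Qq). pose proof (Rle_abs q). lra.
- exists (- B). intros de Hde.
  destruct (Qne (Rmin de d0)) as [q Qq]; [apply Rmin_glb_lt; lra|].
  exists q. split; [apply (Qmono _ de q (Rmin_l _ _) Qq)|].
  pose proof (Qbound _ q (Rmin_r _ _) Qq). pose proof (Rle_abs (- q)).
  rewrite Rabs_Ropp in *. lra.
- exists L. split.
  + intros eps Heps. apply NNPP. intros Hn.
    assert (EL : E (L + eps)).
    { intros de Hde. apply NNPP. intros Hq. apply Hn. exists de.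
      split; [exact Hde|]. intros q Qq. apply Rnot_lt_le. intros Hlt.
      apply Hq. exists q. split; [exact Qq|lra]. }
    destruct HL as [HL _]. pose proof (HL _ EL). lra.
  + intros eps de Heps Hde.
    destruct (lub_approx E L eps HL Heps) as [y [Ey Hy]].
    destruct (Ey de Hde) as [q [Qq Hq]]. exists q. split; [exact Qq|lra].
Qed.

(** ** The Clarke generalized directional derivative *)

Section ClarkeDerivative.
Variable X : NormedSpace.
Variable phi : X -> R.
Variable z : X.

Definition diff_quot (w d : X) (t : R) : R := (phi (nadd w (nscal t d)) - phi w) / t.

Lemma is_clarke_dd_unique d L1 L2 :
  is_clarke_dd phi z d L1 -> is_clarke_dd phi z d L2 -> L1 = L2.
Proof.
assert (H : forall A B, is_clarke_dd phi z d A -> is_clarke_dd phi z d B -> ~ A < B).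
{ intros A B [HA _] [_ HB] Hlt.
  destruct (HA ((B - A) / 2)) as [de [Hde Hq]]; [lra|].
  destruct (HB ((B - A) / 2) de) as [w [t [Hw [Ht Hq2]]]]; [lra|lra|].
  specialize (Hq w t Hw Ht). lra. }
intros H1 H2. destruct (Rtotal_order L1 L2) as [h|[h|h]]; auto.
- exfalso; exact (H _ _ H1 H2 h).
- exfalso; exact (H _ _ H2 H1 h).
Qed.

Lemma is_clarke_dd_scale a d L : 0 < a ->
  is_clarke_dd phi z d L -> is_clarke_dd phi z (nscal a d) (a * L).
Proof.
intros Ha [C1 C2]. split.
- intros eps He.
  destruct (C1 (eps / a)) as [de [Hde Hq]]; [apply Rdiv_lt_0_compat; lra|].
  exists (Rmin de (de / a)).
  split; [apply Rmin_glb_lt; [lra|apply Rdiv_lt_0_compat; lra]|].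
  intros w t Hw Ht.
  assert (h1 := Rmin_l de (de / a)). assert (h2 := Rmin_r de (de / a)).
  assert (Hta : t * a < de).
  { assert (t * a < de / a * a) by (apply Rmult_lt_compat_r; lra).
    replace (de / a * a) with de in * by (field; lra). lra. }
  specialize (Hq w (t * a) ltac:(lra) ltac:(split; nra)).
  rewrite nscal_assoc.
  set (N := phi (nadd w (nscal (t * a) d)) - phi w) in *.
  replace (N / t) with (a * (N / (t * a))) by (field; lra).
  apply Rmult_le_compat_l with (r := a) in Hq; [|lra].
  replace (a * (L + eps / a)) with (a * L + eps) in Hq by (field; lra). exact Hq.
- intros eps de He Hde.
  destruct (C2 (eps / a) (Rmin de (a * de))) as [w [t [Hw [Ht Hq]]]];
    [apply Rdiv_lt_0_compat; lra|apply Rmin_glb_lt; nra|].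
  assert (h1 := Rmin_l de (a * de)). assert (h2 := Rmin_r de (a * de)).
  exists w, (t / a). split; [lra|]. split.
  { split; [apply Rdiv_lt_0_compat; lra|]. apply Rmult_lt_reg_r with a; [lra|].
    replace (t / a * a) with t by (field; lra). nra. }
  rewrite nscal_assoc. replace (t / a * a) with t by (field; lra).
  set (N := phi (nadd w (nscal t d)) - phi w) in *.
  replace (N / (t / a)) with (a * (N / t)) by (field; lra).
  apply Rmult_lt_compat_l with (r := a) in Hq; [|lra].
  replace (a * (L - eps / a)) with (a * L - eps) in Hq by (field; lra). exact Hq.
Qed.

(** Subadditivity: [phi°(z; d1 + d2) <= phi°(z; d1) + phi°(z; d2)], by
    splitting a difference quotient at the intermediate point [w + t d1]. *)
Lemma is_clarke_dd_subadd d1 d2 L1 L2 L :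
  is_clarke_dd phi z d1 L1 -> is_clarke_dd phi z d2 L2 ->
  is_clarke_dd phi z (nadd d1 d2) L -> L <= L1 + L2.
Proof.
intros [A1 _] [B1 _] [_ C2]. apply Rnot_lt_le. intros Hlt.
set (eps := (L - L1 - L2) / 3).
assert (He : 0 < eps) by (unfold eps; lra).
destruct (A1 eps He) as [de1 [Hde1 Hq1]].
destruct (B1 eps He) as [de2 [Hde2 Hq2]].
pose proof (nnorm_ge0 _ d1) as Hd1.
set (de := Rmin de1 (de2 / (1 + nnorm d1))).
assert (Hde : 0 < de) by (apply Rmin_glb_lt; [lra|apply Rdiv_lt_0_compat; lra]).
assert (h1 : de <= de1) by apply Rmin_l.
assert (h3 : de * (1 + nnorm d1) <= de2).
{ assert (h2 : de <= de2 / (1 + nnorm d1)) by apply Rmin_r.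
  apply Rmult_le_compat_r with (r := 1 + nnorm d1) in h2; [|lra].
  replace (de2 / (1 + nnorm d1) * (1 + nnorm d1)) with de2 in h2 by (field; lra).
  exact h2. }
destruct (C2 eps de He Hde) as [w [t [Hw [Ht Hq]]]].
set (w' := nadd w (nscal t d1)).
assert (Hw' : nnorm (nsub w' z) < de2).
{ unfold w'. rewrite nsub_add_r. eapply Rle_lt_trans; [apply nnorm_triangle|].
  rewrite nnorm_scal, Rabs_pos_eq by lra. nra. }
specialize (Hq1 w t ltac:(lra) ltac:(lra)).
specialize (Hq2 w' t Hw' ltac:(nra)).
assert (Ew : nadd w (nscal t (nadd d1 d2)) = nadd w' (nscal t d2)).
{ unfold w'. rewrite nscal_distr_v. apply nadd_assoc. }
rewrite Ew in Hq.
assert (Hsplit : (phi (nadd w' (nscal t d2)) - phi w) / t =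
   (phi (nadd w' (nscal t d2)) - phi w') / t + (phi w' - phi w) / t)
  by (field; lra).
unfold w' in Hsplit at 3. rewrite Hsplit in Hq. unfold eps in *. lra.
Qed.

Variables r K : R.
Hypothesis r_pos : 0 < r.
Hypothesis phi_lip : forall x y, nnorm (nsub x z) < r -> nnorm (nsub y z) < r ->
  Rabs (phi x - phi y) <= K * nnorm (nsub x y).

Lemma diff_quot_bound d w t :
  nnorm (nsub w z) < r / (1 + nnorm d) -> 0 < t < r / (1 + nnorm d) ->
  Rabs (diff_quot w d t) <= Rabs K * nnorm d.
Proof.
intros Hw Ht. pose proof (nnorm_ge0 _ d) as Hd.
assert (Hr1 : r / (1 + nnorm d) <= r).
{ unfold Rdiv. rewrite <- (Rmult_1_r r) at 2. apply Rmult_le_compat_l; [lra|].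
  rewrite <- Rinv_1. apply Rinv_le_contravar; lra. }
assert (Hb : nnorm (nsub (nadd w (nscal t d)) z) < r).
{ rewrite nsub_add_r. eapply Rle_lt_trans; [apply nnorm_triangle|].
  rewrite nnorm_scal, Rabs_pos_eq by lra.
  assert (t * nnorm d <= r / (1 + nnorm d) * nnorm d)
    by (apply Rmult_le_compat_r; lra).
  assert (r / (1 + nnorm d) * (1 + nnorm d) = r) by (field; lra). nra. }
pose proof (phi_lip _ w Hb ltac:(lra)) as Hl.
rewrite nsub_addl, nnorm_scal, (Rabs_pos_eq t) in Hl by lra.
unfold diff_quot, Rdiv. rewrite Rabs_mult, Rabs_inv, (Rabs_pos_eq t) by lra.
apply Rmult_le_reg_r with t; [lra|].
rewrite Rmult_assoc, Rinv_l, Rmult_1_r by lra.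
pose proof (Rle_abs K). assert (0 <= t * nnorm d) by (apply Rmult_le_pos; lra).
nra.
Qed.

Lemma is_clarke_dd_exists d : exists L, is_clarke_dd phi z d L.
Proof.
pose proof (nnorm_ge0 _ d) as Hd.
set (Q := fun de q => exists w t, nnorm (nsub w z) < de /\ 0 < t < de /\
                                  q = diff_quot w d t).
destruct (limsup_exists Q (r / (1 + nnorm d)) (Rabs K * nnorm d)) as [L [H1 H2]].
- apply Rdiv_lt_0_compat; lra.
- intros de Hde. exists (diff_quot z d (de / 2)), z, (de / 2).
  rewrite nsub_xx, nnorm_zero. repeat split; lra.
- intros de1 de2 q Hle [w [t [Hw [Ht ->]]]]. exists w, t. repeat split; lra.
- intros de q Hde [w [t [Hw [Ht ->]]]]. apply diff_quot_bound; lra.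
- exists L. split.
  + intros eps He. destruct (H1 eps He) as [de [Hde Hq]]. exists de.
    split; [exact Hde|]. intros w t Hw Ht. apply Hq. exists w, t. auto.
  + intros eps de He Hde. destruct (H2 eps de He Hde) as [q [[w [t [Hw [Ht ->]]]] Hq]].
    exists w, t. auto.
Qed.

Lemma is_clarke_dd_bound d L : is_clarke_dd phi z d L -> L <= Rabs K * nnorm d.
Proof.
intros [_ C2]. pose proof (nnorm_ge0 _ d). apply Rnot_lt_le. intros Hlt.
destruct (C2 (L - Rabs K * nnorm d) (r / (1 + nnorm d))) as [w [t [Hw [Ht Hq]]]];
  [lra|apply Rdiv_lt_0_compat; lra|].
pose proof (diff_quot_bound d w t Hw Ht) as Hb. unfold diff_quot in Hb.
pose proof (Rle_abs ((phi (nadd w (nscal t d)) - phi w) / t)). lra.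
Qed.

End ClarkeDerivative.

(** The Clarke derivative as a total function of the direction; it is
    well defined at every point of a locally Lipschitz function. *)
Definition clarke_dd {X : NormedSpace} (phi : X -> R) (z d : X) : R :=
  epsilon (inhabits 0) (fun L => is_clarke_dd phi z d L).

Section ClarkeSubgradients.
Variable X : NormedSpace.
Variable phi : X -> R.
Hypothesis phi_loclip : locally_lipschitz phi.

Lemma clarke_dd_spec z d : is_clarke_dd phi z d (clarke_dd phi z d).
Proof.
unfold clarke_dd. apply epsilon_spec.
destruct (phi_loclip z) as [r [K [Hr Hlip]]]. exact (is_clarke_dd_exists X phi z r K Hr Hlip d).
Qed.

Lemma clarke_dd_subadd z d1 d2 :
  clarke_dd phi z (nadd d1 d2) <= clarke_dd phi z d1 + clarke_dd phi z d2.
Proof. apply (is_clarke_dd_subadd X phi z d1 d2); apply clarke_dd_spec. Qed.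

Lemma clarke_dd_poshom z a d : 0 < a -> clarke_dd phi z (nscal a d) = a * clarke_dd phi z d.
Proof.
intros Ha. apply (is_clarke_dd_unique X phi z (nscal a d)); [apply clarke_dd_spec|].
apply is_clarke_dd_scale; [exact Ha|apply clarke_dd_spec].
Qed.

(** A linear functional below [phi°(z; .)] is a Clarke subgradient at [z]; its
    continuity comes from the Lipschitz bound on [phi°(z; .)]. *)
Lemma dominated_functional_subgradient z f : is_linear_functional f ->
  (forall d, f d <= clarke_dd phi z d) -> clarke_subdiff phi z f.
Proof.
intros [Lf1 Lf2] Hf. destruct (phi_loclip z) as [r [K [Hr Hlip]]].
assert (Hbound : forall d, f d <= Rabs K * nnorm d).
{ intros d. eapply Rle_trans; [apply Hf|].
  apply (is_clarke_dd_bound X phi z r K Hr Hlip), clarke_dd_spec. }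
split; [split; [split; assumption|]|].
- exists (Rabs K). intros x. apply Rabs_le. split; [|apply Hbound].
  pose proof (Hbound (nscal (-1) x)) as H.
  rewrite Lf2, nnorm_scal, Rabs_minus_one in H. lra.
- intros d L HL. rewrite (is_clarke_dd_unique X phi z d L _ HL (clarke_dd_spec z d)).
  apply Hf.
Qed.

(** Hypothesis (b) forces [phi°(v; v) < 0] on the level set [phi = mu]: by
    Hahn-Banach some subgradient [f] satisfies [f v = phi°(v; v)]. *)
Lemma clarke_dd_negative_on_level mu :
  (forall v, phi v = mu -> forall vs, clarke_subdiff phi v vs -> vs v < 0) ->
  forall v, phi v = mu -> v <> nzero -> clarke_dd phi v v < 0.
Proof.
intros Hb v Hv Hnz.
destruct (hahn_banach_at X (clarke_dd phi v) (clarke_dd_subadd v)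
            (fun a x Ha => clarke_dd_poshom v a x Ha) v Hnz) as [f [Lf [Hfp Hfv]]].
rewrite <- Hfv. apply (Hb v Hv f). apply dominated_functional_subgradient; assumption.
Qed.

End ClarkeSubgradients.

Lemma neg_of_neg_quot N h : 0 < h -> N / h < 0 -> N < 0.
Proof. intros Hh Hq. assert (N = N / h * h) by (field; lra). nra. Qed.

Lemma clarke_descent (X : NormedSpace) (phi : X -> R) v d L :
  is_clarke_dd phi v d L -> L < 0 ->
  exists de, 0 < de /\ forall h, 0 < h < de ->
    phi (nadd v (nscal h d)) < phi v /\ phi v < phi (nadd v (nscal (- h) d)).
Proof.
intros [C1 _] HL. pose proof (nnorm_ge0 _ d) as Hd.
destruct (C1 (- L / 2)) as [de1 [Hde1 Hq]]; [lra|].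
exists (de1 / (1 + nnorm d)). split; [apply Rdiv_lt_0_compat; lra|].
intros h Hh.
assert (Hh1 : h * (1 + nnorm d) < de1).
{ destruct Hh as [_ Hh]. apply Rmult_lt_compat_r with (r := 1 + nnorm d) in Hh; [|lra].
  replace (de1 / (1 + nnorm d) * (1 + nnorm d)) with de1 in Hh by (field; lra). exact Hh. }
split.
- apply Rminus_lt, (neg_of_neg_quot _ h); [lra|].
  assert (Hq' := Hq v h). rewrite nsub_xx, nnorm_zero in Hq'.
  specialize (Hq' ltac:(lra) ltac:(nra)). lra.
- set (w := nadd v (nscal (- h) d)).
  assert (Hw : nnorm (nsub w v) < de1).
  { unfold w. rewrite nsub_addl, nnorm_scal, Rabs_Ropp, Rabs_pos_eq by lra. nra. }
  assert (Ew : nadd w (nscal h d) = v).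
  { unfold w. rewrite <- nadd_assoc, <- nscal_distr_s.
    replace (- h + h) with 0 by ring. rewrite nscal_0. apply nadd_0. }
  specialize (Hq w h Hw ltac:(nra)). rewrite Ew in Hq.
  apply Rminus_lt, (neg_of_neg_quot _ h); [lra|]. lra.
Qed.

(** ** Level crossings of continuous real functions *)

Definition real_continuous (h : R -> R) : Prop :=
  forall t eps, 0 < eps -> exists de, 0 < de /\
    forall s, Rabs (s - t) < de -> Rabs (h s - h t) < eps.

Lemma real_continuous_opp h : real_continuous h -> real_continuous (fun t => - h t).
Proof.
intros Hh t eps He. destruct (Hh t eps He) as [de [Hde Hs]]. exists de.
split; [exact Hde|]. intros s Hst.
replace (- h s - - h t) with (- (h s - h t)) by ring. rewrite Rabs_Ropp. auto.
Qed.

Lemma first_hit (h : R -> R) (c lo : R) : real_continuous h ->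
  (exists t, lo <= t /\ h t <= c) ->
  exists s0, lo <= s0 /\ h s0 <= c /\ (forall s, lo <= s < s0 -> c < h s) /\
    (lo < s0 -> h s0 = c).
Proof.
intros hc hex.
set (E := fun y => exists t, lo <= t /\ h t <= c /\ y = - t).
destruct (completeness E) as [m [Hm1 Hm2]].
{ exists (- lo). intros y [t [H1 [H2 ->]]]. lra. }
{ destruct hex as [t [H1 H2]]. exists (- t), t. auto. }
(* [- m] is the infimum of the hitting set. *)
assert (Tlb : forall t, lo <= t -> h t <= c -> - m <= t).
{ intros t H1 H2. assert (- t <= m) by (apply Hm1; exists t; auto). lra. }
assert (Tgr : forall b, (forall t, lo <= t -> h t <= c -> b <= t) -> b <= - m).
{ intros b Hb. assert (m <= - b); [|lra]. apply Hm2. intros y [t [H1 [H2 ->]]].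
  pose proof (Hb t H1 H2). lra. }
assert (Tlo : lo <= - m) by (apply Tgr; intros; lra).
assert (Habove : forall s, lo <= s < - m -> c < h s).
{ intros s [H1 H2]. apply Rnot_le_lt. intros H3. pose proof (Tlb s H1 H3). lra. }
assert (HT : h (- m) <= c).
{ apply Rnot_lt_le. intros Hlt. destruct (hc (- m) (h (- m) - c)) as [de [Hde Hs]]; [lra|].
  assert (- m + de / 2 <= - m); [|lra]. apply Tgr. intros t H1 H2.
  apply Rnot_lt_le. intros Ht. pose proof (Tlb t H1 H2).
  assert (Hd : Rabs (t - - m) < de) by (apply Rabs_def1; lra).
  specialize (Hs t Hd). rewrite Rabs_minus_sym in Hs.
  pose proof (Rle_abs (h (- m) - h t)). lra. }
exists (- m). split; [exact Tlo|]. split; [exact HT|]. split; [exact Habove|].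
intros Hlt. apply Rle_antisym; [exact HT|]. apply Rnot_lt_le. intros Hlt2.
destruct (hc (- m) (c - h (- m))) as [de [Hde Hs]]; [lra|].
set (s := Rmax lo (- m - de / 2)).
assert (hs1 : lo <= s) by apply Rmax_l. assert (hs2 : - m - de / 2 <= s) by apply Rmax_r.
assert (hs3 : s < - m) by (apply Rmax_lub_lt; lra).
assert (Hsd : Rabs (s - - m) < de) by (apply Rabs_def1; lra).
specialize (Hs s Hsd). pose proof (Rle_abs (h s - h (- m))).
pose proof (Habove s (conj hs1 hs3)). lra.
Qed.

(** If every crossing of the level [c] after [a] is from above, a continuous
    function below [c] at [a] stays below [c]: otherwise, at its first return
    to [c] it would come from below. *)
Lemma stays_below (h : R -> R) (c a : R) : real_continuous h -> h a < c ->
  (forall t, a < t -> h t = c ->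
     exists de, 0 < de /\ forall s, t - de < s < t -> c < h s) ->
  forall t, a <= t -> h t < c.
Proof.
intros hc Ha Hcross t Ht. apply Rnot_le_lt. intros Hge.
destruct (first_hit (fun x => - h x) (- c) a (real_continuous_opp h hc))
  as [s1 [Ha1 [Hhit [Hbelow Heq]]]].
{ exists t. split; [exact Ht|lra]. }
assert (Has1 : a < s1) by (destruct Ha1 as [H|H]; [exact H|subst s1; lra]).
assert (Hs1 : h s1 = c) by (specialize (Heq Has1); lra).
destruct (Hcross s1 Has1 Hs1) as [de [Hde Hleft]].
set (s := Rmax a (s1 - de / 2)).
assert (hs1 : a <= s) by apply Rmax_l. assert (hs2 : s1 - de / 2 <= s) by apply Rmax_r.
assert (hs3 : s < s1) by (apply Rmax_lub_lt; lra).
specialize (Hleft s ltac:(lra)). specialize (Hbelow s ltac:(lra)). lra.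
Qed.

Definition crossing_time (g : R -> R) (c T : R) : Prop :=
  1 < T /\ forall t, 1 <= t ->
    (t < T -> c < g t) /\ (t = T -> g t = c) /\ (T < t -> g t < c).

Lemma crossing_time_exists (g : R -> R) (c : R) : real_continuous g -> c < g 1 ->
  (exists T0, forall t, T0 <= t -> g t < c) ->
  (forall t, 1 <= t -> g t = c -> exists de, 0 < de /\
     (forall s, t - de < s < t -> c < g s) /\ (forall s, t < s < t + de -> g s < c)) ->
  exists T, crossing_time g c T.
Proof.
intros gc H1 [T0 HT0] Hcross.
destruct (first_hit g c 1 gc) as [T [HT1 [Hhit [Habove Heq]]]].
{ exists (Rmax 1 T0). split; [apply Rmax_l|]. left. apply HT0, Rmax_r. }
assert (HT : 1 < T) by (destruct HT1 as [H|H]; [exact H|subst T; lra]).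
specialize (Heq HT).
destruct (Hcross T ltac:(lra) Heq) as [de [Hde [_ Hright]]].
assert (Hafter : forall t, T + de / 2 <= t -> g t < c).
{ apply stays_below; [exact gc|apply Hright; lra|].
  intros t Ht Hgt. destruct (Hcross t ltac:(lra) Hgt) as [de' [Hde' [Hl _]]].
  exists de'. auto. }
exists T. split; [exact HT|]. intros t Ht. split; [|split].
- intros Hlt. apply Habove. lra.
- intros ->. exact Heq.
- intros Hlt. destruct (Rlt_le_dec t (T + de / 2)) as [H|H].
  + apply Hright. lra.
  + apply Hafter. exact H.
Qed.

Lemma crossing_time_lt g c T s : crossing_time g c T -> 1 <= s -> c < g s -> s < T.
Proof.
intros [_ HT] Hs Hg. apply Rnot_le_lt. intros Hle. destruct (HT s Hs) as [_ [H2 H3]].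
destruct Hle as [Hlt|Heq]; [specialize (H3 Hlt)|specialize (H2 (eq_sym Heq))]; lra.
Qed.

Lemma crossing_time_gt g c T s : crossing_time g c T -> 1 <= s -> g s < c -> T < s.
Proof.
intros [_ HT] Hs Hg. apply Rnot_le_lt. intros Hle. destruct (HT s Hs) as [H1 [H2 _]].
destruct Hle as [Hlt|Heq]; [specialize (H1 Hlt)|specialize (H2 Heq)]; lra.
Qed.

(** ** Crossing times along rays *)

Section Rays.
Variable X : NormedSpace.
Variable phi : X -> R.
Hypothesis phi_loclip : locally_lipschitz phi.

Lemma phi_continuous x eps : 0 < eps -> exists de, 0 < de /\
  forall y, nnorm (nsub y x) < de -> Rabs (phi y - phi x) < eps.
Proof.
intros He. destruct (phi_loclip x) as [r [K [Hr Hlip]]].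
pose proof (Rabs_pos K). pose proof (Rle_abs K).
set (de := Rmin r (eps / (Rabs K + 1))).
assert (h1 : de <= r) by apply Rmin_l.
assert (h2 : de * (Rabs K + 1) <= eps).
{ assert (h : de <= eps / (Rabs K + 1)) by apply Rmin_r.
  apply Rmult_le_compat_r with (r := Rabs K + 1) in h; [|lra].
  replace (eps / (Rabs K + 1) * (Rabs K + 1)) with eps in h by (field; lra). exact h. }
exists de. split; [apply Rmin_glb_lt; [lra|apply Rdiv_lt_0_compat; lra]|].
intros y Hy. pose proof (nnorm_ge0 _ (nsub y x)).
assert (Hxx : nnorm (nsub x x) < r) by (rewrite nsub_xx, nnorm_zero; lra).
pose proof (Hlip y x ltac:(lra) Hxx). nra.
Qed.

Lemma phi_scaled_continuous c u eps : 0 < eps -> exists de, 0 < de /\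
  forall v, nnorm (nsub v u) < de -> Rabs (phi (nscal c v) - phi (nscal c u)) < eps.
Proof.
intros He. destruct (phi_continuous (nscal c u) eps He) as [de [Hde Hc]].
pose proof (Rabs_pos c).
exists (de / (1 + Rabs c)). split; [apply Rdiv_lt_0_compat; lra|].
intros v Hv. apply Hc. rewrite nsub_scal_r, nnorm_scal.
pose proof (nnorm_ge0 _ (nsub v u)).
apply Rmult_lt_compat_r with (r := 1 + Rabs c) in Hv; [|lra].
replace (de / (1 + Rabs c) * (1 + Rabs c)) with de in Hv by (field; lra). nra.
Qed.

Section UnitRay.
Variable u : X.
Hypothesis u_unit : nnorm u = 1.

Lemma ray_continuous : real_continuous (fun t => phi (nscal t u)).
Proof.
intros t eps He. destruct (phi_continuous (nscal t u) eps He) as [de [Hde H]].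
exists de. split; [exact Hde|]. intros s Hs. apply H.
rewrite nsub_scal, nnorm_scal, u_unit. lra.
Qed.

(** Under hypothesis (b), [t |-> phi (t u)] crosses [mu] strictly downward
    wherever it meets it, by [clarke_descent] at [v = t u] in direction [v]. *)
Lemma ray_crossing mu :
  (forall v, phi v = mu -> forall vs, clarke_subdiff phi v vs -> vs v < 0) ->
  forall t, 1 <= t -> phi (nscal t u) = mu -> exists de, 0 < de /\
    (forall s, t - de < s < t -> mu < phi (nscal s u)) /\
    (forall s, t < s < t + de -> phi (nscal s u) < mu).
Proof.
intros Hb t Ht Hlevel. set (v := nscal t u).
assert (Hv : v <> nzero).
{ intros E. assert (Hn : nnorm v = t).
  { unfold v. rewrite nnorm_scal, u_unit, Rabs_pos_eq; lra. }
  rewrite E, nnorm_zero in Hn. lra. }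
pose proof (clarke_dd_negative_on_level X phi phi_loclip mu Hb v Hlevel Hv) as HL.
destruct (clarke_descent X phi v v _ (clarke_dd_spec X phi phi_loclip v v) HL)
  as [de [Hde Hdesc]].
assert (Hpt : forall h, nadd v (nscal h v) = nscal (t + h * t) u)
  by (intros h; apply nadd_scal_scal).
exists (t * de). split; [nra|]. split.
- intros s Hs. set (h := (t - s) / t).
  assert (Hh : 0 < h < de).
  { unfold h. split; [apply Rdiv_lt_0_compat; lra|].
    apply Rmult_lt_reg_r with t; [lra|].
    replace ((t - s) / t * t) with (t - s) by (field; lra). lra. }
  destruct (Hdesc h Hh) as [_ H]. rewrite Hpt in H.
  replace (t + - h * t) with s in H by (unfold h; field; lra). unfold v in H. lra.
- intros s Hs. set (h := (s - t) / t).
  assert (Hh : 0 < h < de).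
  { unfold h. split; [apply Rdiv_lt_0_compat; lra|].
    apply Rmult_lt_reg_r with t; [lra|].
    replace ((s - t) / t * t) with (s - t) by (field; lra). lra. }
  destruct (Hdesc h Hh) as [H _]. rewrite Hpt in H.
  replace (t + h * t) with s in H by (unfold h; field; lra). unfold v in H. lra.
Qed.

End UnitRay.

(** The crossing time of [mu] along rays depends continuously on the
    direction: the strict signs at [(T -+ e) u] persist for nearby [v]. *)
Lemma crossing_time_continuous mu (S : X -> Prop) (tau : X -> R) :
  (forall u, S u -> crossing_time (fun t => phi (nscal t u)) mu (tau u)) ->
  forall u, S u -> forall eps, 0 < eps -> exists de, 0 < de /\
    forall v, S v -> nnorm (nsub v u) < de -> Rabs (tau v - tau u) < eps.
Proof.
intros Htau u Su eps He. pose proof (Htau u Su) as HTu. destruct HTu as [HT1 HT2].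
set (T := tau u) in *.
set (e := Rmin eps (T - 1) / 2).
assert (he : 0 < e /\ e < eps /\ e < T - 1).
{ assert (Rmin eps (T - 1) <= eps) by apply Rmin_l.
  assert (Rmin eps (T - 1) <= T - 1) by apply Rmin_r.
  assert (0 < Rmin eps (T - 1)) by (apply Rmin_glb_lt; lra). unfold e; lra. }
assert (Hlo : mu < phi (nscal (T - e) u)) by (apply (HT2 (T - e)); lra).
assert (Hhi : phi (nscal (T + e) u) < mu) by (apply (HT2 (T + e)); lra).
destruct (phi_scaled_continuous (T - e) u (phi (nscal (T - e) u) - mu))
  as [de1 [Hde1 C1]]; [lra|].
destruct (phi_scaled_continuous (T + e) u (mu - phi (nscal (T + e) u)))
  as [de2 [Hde2 C2]]; [lra|].
exists (Rmin de1 de2). split; [apply Rmin_glb_lt; lra|].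
intros v Sv Hv.
assert (k1 : nnorm (nsub v u) < de1) by (pose proof (Rmin_l de1 de2); lra).
assert (k2 : nnorm (nsub v u) < de2) by (pose proof (Rmin_r de1 de2); lra).
specialize (C1 v k1). specialize (C2 v k2).
pose proof (Rle_abs (phi (nscal (T - e) u) - phi (nscal (T - e) v))).
pose proof (Rle_abs (phi (nscal (T + e) v) - phi (nscal (T + e) u))).
rewrite Rabs_minus_sym in C1.
assert (B1 : T - e < tau v) by (apply (crossing_time_lt _ mu _ _ (Htau v Sv)); lra).
assert (B2 : tau v < T + e) by (apply (crossing_time_gt _ mu _ _ (Htau v Sv)); lra).
apply Rabs_def1; lra.
Qed.

End Rays.

Theorem lemma2p5 (X : NormedSpace) (HB : banach X) (Hrefl : reflexive X)
  (S : X -> Prop) (phi : X -> R) (mu : R)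
  (HSsphere : forall u, S u -> nnorm u = 1)
  (HSne : exists u, S u)
  (Hphi : locally_lipschitz phi)
  (Hmu : exists m, mu < m /\ forall u, S u -> m <= phi u)
  (Ha : forall u, S u -> forall M, exists T, forall t, T <= t -> phi (nscal t u) < M)
  (Hb : forall v, phi v = mu -> forall vs, clarke_subdiff phi v vs -> vs v < 0) :
  exists tau : X -> R,
    (forall u, S u -> 1 < tau u) /\
    (forall u, S u -> forall eps, 0 < eps -> exists delta, 0 < delta /\
        forall v, S v -> nnorm (nsub v u) < delta -> Rabs (tau v - tau u) < eps) /\
    (forall u t, S u -> 1 <= t ->
        (t < tau u -> mu < phi (nscal t u)) /\
        (t = tau u -> phi (nscal t u) = mu) /\
        (tau u < t -> phi (nscal t u) < mu)).
Proof.
set (tau := fun u => epsilon (inhabits 0) (crossing_time (fun t => phi (nscal t u)) mu)).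
assert (Htau : forall u, S u -> crossing_time (fun t => phi (nscal t u)) mu (tau u)).
{ intros u Su. unfold tau. apply epsilon_spec.
  destruct Hmu as [m [Hm Hmin]].
  apply crossing_time_exists.
  - exact (ray_continuous X phi Hphi u (HSsphere u Su)).
  - rewrite nscal_1. specialize (Hmin u Su). lra.
  - exact (Ha u Su mu).
  - exact (ray_crossing X phi Hphi u (HSsphere u Su) mu Hb). }
exists tau. split; [|split].
- intros u Su. apply (Htau u Su).
- exact (crossing_time_continuous X phi Hphi mu S tau Htau).
- intros u t Su Ht. apply (Htau u Su). exact Ht.
Qed.
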